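(* Let $0<\kappa<1$. For $\phi$ near $0$ define $$u(\phi)=\int_0^{\phi} F\!\left(\tfrac14,\tfrac34;\tfrac12;\kappa^2\sin^2\theta\right)\,\mathrm{d}\theta ,$$ let $u\mapsto\phi(u)$ be the local inverse near $0$ with $\phi(0)=0$, let $\psi=\psi(u)$ be defined near $u=0$ with $\psi(0)=0$ and $\sin\psi=\kappa\sin\phi$, and set $d=\cos\psi$. Then, near $u=0$, $$d'=-2\kappa\sin\tfrac12\psi\,\cos\phi,$$ where $'$ denotes differentiation with respect to $u$.
   Context: $F(a,b;c;z)$ denotes the Gauss hypergeometric function ${}_2F_1(a,b;c;z)$. *)

From Stdlib Require Import Reals Lra.
From Coquelicot Require Import Coquelicot.
Open Scope R_scope.

Fixpoint poch (a : R) (n : nat) : R :=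
  match n with
  | O => 1
  | S m => poch a m * (a + INR m)
  end.

Definition hyp2F1 (a b c z : R) : R :=
  Series (fun n => poch a n * poch b n / (poch c n * INR (Factorial.fact n)) * z ^ n).

Definition u_of (kappa phi : R) : R :=
  RInt (fun theta => hyp2F1 (1/4) (3/4) (1/2) (kappa ^ 2 * (sin theta) ^ 2)) 0 phi.

(* F(1/4,3/4;1/2;x^2) is the even part of the binomial series of (1-x)^(-1/2), hence equals
   ((1-x)^(-1/2) + (1+x)^(-1/2))/2.  At x = kappa sin theta = sin psi this is cos(psi/2)/cos psi,
   because 1 -+ sin psi = (cos(psi/2) -+ sin(psi/2))^2.  So du/dphi = cos(psi/2)/cos psi, while
   d = cos psi = sqrt(1 - kappa^2 sin^2 phi) has dd/dphi = -kappa sin psi cos phi / cos psi; the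
   chain rule and sin psi = 2 sin(psi/2) cos(psi/2) give the claim. *)
From Stdlib Require Import Reals Lra Lia Factorial.
From Coquelicot Require Import Coquelicot.
Open Scope R_scope.

Lemma is_derive_quotient (f : R -> R) (x l : R) :
  is_derive f x l <-> is_lim (fun h => (f (x + h) - f x) / h) 0 l.
Proof.
  rewrite is_derive_Reals, is_lim_Reals. split.
  - apply uniqueness_step2.
  - apply uniqueness_step3.
Qed.

Lemma locally_shift (s : R) (P : R -> Prop) :
  locally s P -> locally 0 (fun h => P (s + h)).
Proof.
  intros HP.
  assert (Hc : filterlim (fun h => s + h) (locally 0) (locally (s + 0))).
  { apply (continuous_plus (fun _ => s) (fun h => h)).
    - apply continuous_const.
    - apply continuous_id. }
  rewrite Rplus_0_r in Hc. exact (Hc _ HP).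
Qed.

(* With k(h) = g(s+h) - g(s), which is nonzero for small h <> 0 since f (g (s+h)) = s + h,
   h / k(h) is the difference quotient of f at g s along k(h) -> 0, so it tends to L. *)
Lemma is_derive_inverse (f g : R -> R) (s L : R) :
  locally s (fun t => f (g t) = t) -> continuous g s ->
  is_derive f (g s) L -> L <> 0 -> is_derive g s (/ L).
Proof.
  intros Hfg Hg Hf HL.
  set (k h := g (s + h) - g s).
  assert (Hfg0 : f (g s) = s) by apply (locally_singleton _ _ Hfg).
  assert (Hshift := locally_shift s _ Hfg).
  assert (Hk : is_lim k 0 0).
  { replace 0 with (k 0) at 2 by (unfold k; rewrite Rplus_0_r; ring).
    apply is_lim_continuity, continuity_pt_filterlim.
    apply (continuous_minus (fun h => g (s + h)) (fun _ => g s)); [|apply continuous_const].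
    apply continuous_comp; [|rewrite Rplus_0_r; exact Hg].
    apply (continuous_plus (fun _ => s) (fun h => h));
      [apply continuous_const | apply continuous_id]. }
  assert (Hk0 : Rbar_locally' 0 (fun h => k h <> 0)).
  { unfold Rbar_locally', locally', within. eapply filter_imp; [|exact Hshift].
    intros h Hh Hh0 Hkh. apply Hh0.
    assert (E : g (s + h) = g s) by (unfold k in Hkh; lra).
    cbv beta in Hh. rewrite E, Hfg0 in Hh. lra. }
  assert (Hq : is_lim (fun h => h / k h) 0 L).
  { apply is_lim_ext_loc with (fun h => (f (g s + k h) - f (g s)) / k h).
    - unfold Rbar_locally', locally', within. eapply filter_imp; [|exact Hshift].
      intros h Hh _. unfold k. replace (g s + (g (s + h) - g s)) with (g (s + h)) by ring.
      rewrite Hh, Hfg0. f_equal. ring.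
    - apply (is_lim_comp (fun q => (f (g s + q) - f (g s)) / q) k 0 L 0);
        [now apply is_derive_quotient | exact Hk |].
      eapply filter_imp; [|exact Hk0]. intros h Hh E. apply Hh. now injection E. }
  apply is_derive_quotient, is_lim_ext_loc with (fun h => / (h / k h)).
  - revert Hk0. unfold Rbar_locally', locally', within. apply filter_imp.
    intros h Hkh Hh0. specialize (Hkh Hh0). unfold k in *. field. split; assumption.
  - apply (is_lim_inv _ 0 L Hq). intros E. apply HL. now injection E.
Qed.

Lemma locally_Rabs_lt (x d : R) : Rabs x < d -> locally x (fun t => Rabs t < d).
Proof.
  intros Hx. assert (Hr : 0 < d - Rabs x) by lra.
  exists (mkposreal _ Hr). intros t Ht. change (Rabs (t - x) < d - Rabs x) in Ht.
  pose proof (Rabs_triang_inv t x). lra.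
Qed.

Lemma locally_locally_Rabs (P : R -> Prop) :
  locally 0 P -> exists delta : posreal, forall s, Rabs s < delta -> locally s P.
Proof.
  intros HP. destruct (locally_locally _ _ HP) as [delta Hdelta].
  exists delta. intros s Hs. apply Hdelta.
  change (Rabs (s - 0) < delta). now rewrite Rminus_0_r.
Qed.

Lemma poch_pos (a : R) (n : nat) : 0 < a -> 0 < poch a n.
Proof.
  intros Ha. induction n as [|n IH]; simpl; [lra|].
  apply Rmult_lt_0_compat; [exact IH|]. pose proof (pos_INR n). lra.
Qed.

Lemma Rabs_lt_CV_radius_of_bounded (a : nat -> R) (x : R) :
  (forall n, Rabs (a n) <= 1) -> Rabs x < 1 -> Rbar_lt (Rabs x) (CV_radius a).
Proof.
  intros Ha Hx. apply Rbar_lt_le_trans with (Finite 1); [exact Hx|].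
  apply (proj1 (CV_radius_bounded a)). exists 1. intros n.
  rewrite pow1, Rmult_1_r. apply Ha.
Qed.

Definition binom_half (n : nat) : R := poch (1/2) n / INR (fact n).

Lemma binom_half_S (n : nat) :
  binom_half (S n) = binom_half n * (1/2 + INR n) / INR (S n).
Proof.
  unfold binom_half. simpl poch.
  change (fact (S n)) with (S n * fact n)%nat. rewrite mult_INR, S_INR.
  pose proof (INR_fact_lt_0 n). pose proof (pos_INR n). field. lra.
Qed.

Lemma binom_half_bound (n : nat) : 0 < binom_half n <= 1.
Proof.
  induction n as [|n IH]; [unfold binom_half; simpl; lra|].
  rewrite binom_half_S, S_INR. pose proof (pos_INR n).
  split.
  - apply Rdiv_lt_0_compat; [apply Rmult_lt_0_compat|]; lra.
  - apply Rmult_le_reg_r with (INR n + 1); [lra|].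
    unfold Rdiv. rewrite Rmult_assoc, Rinv_l by lra. nra.
Qed.

Lemma Rabs_binom_half_le1 (n : nat) : Rabs (binom_half n) <= 1.
Proof. destruct (binom_half_bound n). rewrite Rabs_pos_eq; lra. Qed.

Lemma Rabs_lt_CV_radius_binom_half (x : R) :
  Rabs x < 1 -> Rbar_lt (Rabs x) (CV_radius binom_half).
Proof. apply Rabs_lt_CV_radius_of_bounded, Rabs_binom_half_le1. Qed.

(* (1 - x) y' = y / 2, the differential equation of (1 - x)^(-1/2), read off the recurrence
   (n + 1) c_(n+1) = (n + 1/2) c_n. *)
Lemma PSeries_binom_half_ode (x : R) : Rabs x < 1 ->
  PSeries (PS_derive binom_half) x * (1 - x) = PSeries binom_half x / 2.
Proof.
  intros Hx.
  assert (E1 := ex_pseries_derive _ _ (Rabs_lt_CV_radius_binom_half x Hx)).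
  assert (E2 := ex_pseries_incr_1 _ _ E1).
  replace (PSeries (PS_derive binom_half) x * (1 - x)) with
    (PSeries (PS_derive binom_half) x - PSeries (PS_incr_1 (PS_derive binom_half)) x)
    by (rewrite PSeries_incr_1; ring).
  replace (PSeries binom_half x / 2) with (PSeries (PS_scal (1/2) binom_half) x)
    by (rewrite PSeries_scal; field).
  rewrite <- PSeries_minus by assumption.
  apply PSeries_ext. intros [|n];
    unfold PS_minus, PS_scal, PS_derive, PS_incr_1, plus, opp, scal, mult; simpl;
    unfold mult; simpl.
  - unfold binom_half, zero; simpl. field.
  - change (match n with 0%nat => 1 | S _ => INR n + 1 end) with (INR (S n)).
    rewrite (binom_half_S (S n)), !S_INR. pose proof (pos_INR n). field. lra.
Qed.

Lemma is_derive_binom_half_mul_sqrt (x : R) : Rabs x < 1 ->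
  is_derive (fun y => PSeries binom_half y * sqrt (1 - y)) x 0.
Proof.
  intros Hx.
  assert (Hx' : 0 < 1 - x) by (apply Rabs_def2 in Hx; lra).
  assert (Hs : 0 < sqrt (1 - x)) by (apply sqrt_lt_R0; lra).
  assert (Dsqrt : is_derive (fun y => sqrt (1 - y)) x (- / (2 * sqrt (1 - x)))).
  { auto_derive; [lra|]. change (1 + - x) with (1 - x). ring. }
  assert (D := is_derive_mult _ _ _ _ _
                 (is_derive_PSeries _ _ (Rabs_lt_CV_radius_binom_half x Hx)) Dsqrt Rmult_comm).
  simpl in D. unfold plus, mult in D; simpl in D.
  replace 0 with (PSeries (PS_derive binom_half) x * sqrt (1 - x)
                  + PSeries binom_half x * - / (2 * sqrt (1 - x))); [exact D|].
  apply Rmult_eq_reg_r with (sqrt (1 - x)); [|lra].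
  rewrite Rmult_plus_distr_r, Rmult_assoc, sqrt_sqrt by lra.
  rewrite PSeries_binom_half_ode by assumption. field. lra.
Qed.

Lemma PSeries_binom_half (x : R) : Rabs x < 1 ->
  PSeries binom_half x = / sqrt (1 - x).
Proof.
  intros Hx. apply Rabs_def2 in Hx.
  assert (Hs : 0 < sqrt (1 - x)) by (apply sqrt_lt_R0; lra).
  set (h y := PSeries binom_half y * sqrt (1 - y)).
  assert (Hh0 : h 0 = 1).
  { unfold h. rewrite PSeries_0, Rminus_0_r, sqrt_1. unfold binom_half; simpl; field. }
  assert (Hderiv : forall a b, -1 < a -> b < 1 -> a < b -> h a = h b).
  { intros a b Ha Hb Hab. apply (eq_is_derive h); [|exact Hab].
    intros t Ht. apply is_derive_binom_half_mul_sqrt, Rabs_def1; lra. }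
  assert (Hhx : h x = 1).
  { rewrite <- Hh0. destruct (Rtotal_order x 0) as [Hl|[->|Hg]].
    - apply Hderiv; lra.
    - reflexivity.
    - symmetry. apply Hderiv; lra. }
  unfold h in Hhx. apply Rmult_eq_reg_r with (sqrt (1 - x)); [|lra].
  rewrite Hhx. field. lra.
Qed.

(* Legendre duplication: (1/4)_n (3/4)_n 4^n = (1/2)_(2n) and (1/2)_n n! 4^n = (2n)!. *)
Lemma hyp2F1_quarter_coef (n : nat) :
  poch (1/4) n * poch (3/4) n / (poch (1/2) n * INR (fact n)) = binom_half (2 * n).
Proof.
  induction n as [|n IH]; [unfold binom_half; simpl; field|].
  replace (2 * S n)%nat with (S (S (2 * n))) by lia.
  rewrite !binom_half_S, <- IH. simpl poch.
  change (fact (S n)) with (S n * fact n)%nat.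
  rewrite !mult_INR, !S_INR, mult_INR. simpl (INR 2).
  pose proof (pos_INR n). pose proof (INR_fact_lt_0 n). pose proof (poch_pos (1/2) n ltac:(lra)).
  rewrite INR_0. field. repeat split; lra.
Qed.

Definition inv_sqrt_even (x : R) : R := (/ sqrt (1 - x) + / sqrt (1 + x)) / 2.

Lemma hyp2F1_quarter_sqr (x : R) : Rabs x < 1 ->
  hyp2F1 (1/4) (3/4) (1/2) (x ^ 2) = inv_sqrt_even x.
Proof.
  intros Hx.
  assert (Hx2 : Rabs (x ^ 2) < 1).
  { apply Rabs_def2 in Hx. rewrite Rabs_pos_eq by apply pow2_ge_0. nra. }
  assert (Hsub : forall m : nat -> nat, ex_pseries (fun n => binom_half (m n)) (x ^ 2)).
  { intros m. apply CV_radius_inside, Rabs_lt_CV_radius_of_bounded; [|exact Hx2].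
    intros n. apply Rabs_binom_half_le1. }
  assert (Hsplit := fun y => PSeries_odd_even binom_half y).
  assert (Hplus := Hsplit x (Hsub _) (Hsub _)).
  assert (Hminus := Hsplit (- x)).
  replace ((- x) ^ 2) with (x ^ 2) in Hminus by ring.
  specialize (Hminus (Hsub _) (Hsub _)).
  rewrite PSeries_binom_half in Hplus by assumption.
  rewrite PSeries_binom_half in Hminus by (rewrite Rabs_Ropp; assumption).
  replace (1 - - x) with (1 + x) in Hminus by ring.
  unfold hyp2F1, inv_sqrt_even.
  replace (Series _) with (PSeries (fun n => binom_half (2 * n)) (x ^ 2)); [lra|].
  apply Series_ext. intros n. now rewrite hyp2F1_quarter_coef.
Qed.

Lemma inv_sqrt_even_pos (x : R) : Rabs x < 1 -> 0 < inv_sqrt_even x.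
Proof.
  intros Hx. apply Rabs_def2 in Hx. unfold inv_sqrt_even.
  assert (0 < / sqrt (1 - x)) by (apply Rinv_0_lt_compat, sqrt_lt_R0; lra).
  assert (0 < / sqrt (1 + x)) by (apply Rinv_0_lt_compat, sqrt_lt_R0; lra).
  lra.
Qed.

Lemma continuous_inv_sqrt_even (x : R) : Rabs x < 1 -> continuous inv_sqrt_even x.
Proof.
  intros Hx. apply Rabs_def2 in Hx.
  apply (ex_derive_continuous (K := R_AbsRing) (V := R_NormedModule)).
  unfold inv_sqrt_even. auto_derive.
  repeat split; try lra; apply Rgt_not_eq, sqrt_lt_R0; lra.
Qed.

Lemma inv_sqrt_even_sin (p : R) : Rabs p < PI / 2 ->
  inv_sqrt_even (sin p) = cos (p / 2) / cos p.
Proof.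
  intros Hp. apply Rabs_def2 in Hp. pose proof PI_RGT_0.
  assert (Hc : 0 < cos (p / 2)) by (apply cos_gt_0; lra).
  assert (Hcp : 0 < cos p) by (apply cos_gt_0; lra).
  assert (Es : sin p = 2 * sin (p / 2) * cos (p / 2)) by (rewrite <- sin_2a; f_equal; field).
  assert (Ec : cos p = cos (p / 2) * cos (p / 2) - sin (p / 2) * sin (p / 2))
    by (rewrite <- cos_2a; f_equal; field).
  rewrite Es, Ec in *.
  set (c := cos (p / 2)) in *. set (s := sin (p / 2)) in *.
  assert (Hsc : s * s + c * c = 1) by apply sin2_cos2.
  unfold inv_sqrt_even.
  replace (1 - 2 * s * c) with ((c - s) ^ 2) by nra.
  replace (1 + 2 * s * c) with ((c + s) ^ 2) by nra.
  rewrite !sqrt_pow2 by nra. field. nra.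
Qed.

Lemma sqrt_1m_sin_sqr (p : R) : Rabs p < PI / 2 -> sqrt (1 - sin p ^ 2) = cos p.
Proof.
  intros Hp. apply Rabs_def2 in Hp.
  assert (Hc : 0 < cos p) by (apply cos_gt_0; lra).
  replace (1 - sin p ^ 2) with (cos p ^ 2) by (pose proof (sin2_cos2 p); unfold Rsqr in *; nra).
  apply sqrt_pow2. lra.
Qed.

Lemma inv_sqrt_even_sin_chain (p c : R) : Rabs p < PI / 2 ->
  / inv_sqrt_even (sin p) * (c * sin p / sqrt (1 - sin p ^ 2)) = 2 * c * sin (p / 2).
Proof.
  intros Hp. rewrite sqrt_1m_sin_sqr, inv_sqrt_even_sin by assumption.
  apply Rabs_def2 in Hp. pose proof PI_RGT_0.
  assert (Hc : 0 < cos (p / 2)) by (apply cos_gt_0; lra).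
  assert (Hcp : 0 < cos p) by (apply cos_gt_0; lra).
  replace (sin p) with (2 * sin (p / 2) * cos (p / 2)) by (rewrite <- sin_2a; f_equal; field).
  field. lra.
Qed.

Lemma Rabs_mul_sin_lt1 (k th : R) : 0 < k < 1 -> Rabs (k * sin th) < 1.
Proof.
  intros Hk. rewrite Rabs_mult, Rabs_pos_eq by lra.
  assert (Rabs (sin th) <= 1) by apply Rabs_le, SIN_bound.
  pose proof (Rabs_pos (sin th)). nra.
Qed.

Lemma is_derive_u_of (k y : R) : 0 < k < 1 ->
  is_derive (u_of k) y (inv_sqrt_even (k * sin y)).
Proof.
  intros Hk.
  set (F th := hyp2F1 (1/4) (3/4) (1/2) (k ^ 2 * sin th ^ 2)).
  assert (HF : forall th, F th = inv_sqrt_even (k * sin th)).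
  { intros th. unfold F. rewrite <- hyp2F1_quarter_sqr by now apply Rabs_mul_sin_lt1.
    f_equal. ring. }
  assert (Fcont : forall th, continuous F th).
  { intros th. apply continuous_ext with (fun t => inv_sqrt_even (k * sin t));
      [intros t; symmetry; apply HF|].
    apply (continuous_comp (fun t => k * sin t)).
    - apply (ex_derive_continuous (K := R_AbsRing) (V := R_NormedModule)). auto_derive. trivial.
    - now apply continuous_inv_sqrt_even, Rabs_mul_sin_lt1. }
  rewrite <- HF. apply is_derive_RInt with 0; [|apply Fcont].
  apply filter_forall. intros b. apply (RInt_correct F), ex_RInt_continuous.
  intros; apply Fcont.
Qed.

Lemma is_derive_sqrt_1m_sqr_mul_sin (k y : R) : 0 < k < 1 ->
  is_derive (fun z => sqrt (1 - (k * sin z) ^ 2)) y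
    (- k * cos y * (k * sin y) / sqrt (1 - (k * sin y) ^ 2)).
Proof.
  intros Hk. pose proof (Rabs_mul_sin_lt1 k y Hk) as Hky. apply Rabs_def2 in Hky.
  assert (Hs : 0 < sqrt (1 - (k * sin y) ^ 2)) by (apply sqrt_lt_R0; nra).
  auto_derive; [nra|].
  replace (1 + - (k * sin y * (k * sin y * 1))) with (1 - (k * sin y) ^ 2) by ring.
  field. lra.
Qed.

Theorem theorem2 (kappa : R) (hk : 0 < kappa < 1)
  (phi psi : R -> R) (eps : R) (heps : 0 < eps)
  (hphi0 : phi 0 = 0)
  (hphi_cont : forall s, Rabs s < eps -> continuous phi s)
  (hphi_inv : forall s, Rabs s < eps -> u_of kappa (phi s) = s)
  (hpsi0 : psi 0 = 0)
  (hpsi_cont : forall s, Rabs s < eps -> continuous psi s)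
  (hpsi : forall s, Rabs s < eps -> sin (psi s) = kappa * sin (phi s)) :
  exists delta, 0 < delta /\
    forall s, Rabs s < delta ->
      is_derive (fun t => cos (psi t)) s
        (- 2 * kappa * sin (psi s / 2) * cos (phi s)).
Proof.
  pose proof PI_RGT_0.
  assert (Hgood : locally 0 (fun t => Rabs t < eps /\ Rabs (psi t) < PI / 2)).
  { assert (H0 : Rabs 0 < eps) by (rewrite Rabs_R0; exact heps).
    apply filter_and; [now apply locally_Rabs_lt|].
    apply (hpsi_cont 0 H0 (fun x => Rabs x < PI / 2)), locally_Rabs_lt.
    rewrite hpsi0, Rabs_R0. lra. }
  destruct (locally_locally_Rabs _ Hgood) as [delta Hdelta].
  exists delta. split; [apply cond_pos|]. intros s Hs.
  specialize (Hdelta s Hs) as Hloc.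
  destruct (locally_singleton _ _ Hloc) as [Hs_eps Hpsi_s].
  assert (Dphi : is_derive phi s (/ inv_sqrt_even (kappa * sin (phi s)))).
  { apply is_derive_inverse with (u_of kappa).
    - eapply filter_imp; [|exact Hloc]. intros t [Ht _]. now apply hphi_inv.
    - now apply hphi_cont.
    - now apply is_derive_u_of.
    - apply Rgt_not_eq, inv_sqrt_even_pos, Rabs_mul_sin_lt1, hk. }
  apply is_derive_ext_loc with (fun t => sqrt (1 - (kappa * sin (phi t)) ^ 2)).
  { eapply filter_imp; [|exact Hloc]. intros t [Ht Hpsi_t].
    now rewrite <- hpsi, sqrt_1m_sin_sqr. }
  replace (- 2 * kappa * sin (psi s / 2) * cos (phi s))
    with (2 * (- kappa * cos (phi s)) * sin (psi s / 2)) by ring.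
  rewrite <- inv_sqrt_even_sin_chain, hpsi by assumption.
  exact (is_derive_comp _ _ _ _ _ (is_derive_sqrt_1m_sqr_mul_sin kappa (phi s) hk) Dphi).
Qed.
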